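(* Let $\Omega=(0,1)^2$, $N\ge2$, $h=1/N$, with grid points $(ih,jh)$, $0\le i,j\le N$; vectors $Z\in\mathbb{R}^{(N+1)^2}$ are indexed by grid points, $Z_I$ denotes the components at grid points in $\Omega$ and $Z_\partial$ those on $\partial\Omega$. Let $\mathcal{L}_h$ be the five-point operator $(\mathcal{L}_hZ)_{i,j}=-h^{-2}(z_{i-1,j}+z_{i+1,j}-4z_{i,j}+z_{i,j-1}+z_{i,j+1})$ at interior grid points. Let $\Omega=\Omega_1\cup\Omega_2$ be an overlapping decomposition into subdomains whose boundaries lie on grid lines; for $i=1,2$ let $Z_i,Z_{i,I},Z_{i,\partial}$ be the components of $Z$ at grid points of $\overline{\Omega_i}$, $\Omega_i$, $\partial\Omega_i$, and $\mathcal{L}_h^{(i)}$ the five-point operator at grid points of $\Omega_i$ acting on vectors indexed by grid points of $\overline{\Omega_i}$. Let $\alpha>0$, $F,Y_d\in\mathbb{R}^{(N+1)^2}$, and let $(Y,P)$ solve $$\mathcal{L}_hY=F_I-\alpha^{-1}h^{-2}P_I,\ Y_\partial=0;\qquad \mathcal{L}_h(h^{-2}P)=Y_I-Y_{d,I},\ P_\partial=0.$$ Given $Y^{(0)},P^{(0)}$ with $Y^{(0)}_\partial=P^{(0)}_\partial=0$, for $k=0,1,2,\dots$ and $i=1,2$ (in the order $i=1$ then $i=2$) define $Y^{(2k+i)},P^{(2k+i)}$ by $$\mathcal{L}_h^{(i)}Y^{(2k+i)}_i=F_{i,I}-\alpha^{-1}h^{-2}P^{(2k+i)}_{i,I},\qquad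 \mathcal{L}_h^{(i)}(h^{-2}P^{(2k+i)}_i)=Y^{(2k+i)}_{i,I}-Y_{d,i,I},$$ $Y^{(2k+i)}_{i,\partial}=Y^{(2k+i-1)}_{i,\partial}$, $P^{(2k+i)}_{i,\partial}=P^{(2k+i-1)}_{i,\partial}$, and $Y^{(2k+i)},P^{(2k+i)}$ equal to $Y^{(2k+i-1)},P^{(2k+i-1)}$ at all grid points not in $\Omega_i$. Define $$E^{(j)}=(Y-Y^{(j)})^2+\frac{\alpha^{-1}}{h^4}(P-P^{(j)})^2$$ (componentwise squares). Consider also the Schwarz alternating method for $\mathcal{L}_hW=0$, $W_\partial=0$: $\mathcal{L}_h^{(i)}W^{(2k+i)}_i=0$, $W^{(2k+i)}_{i,\partial}=W^{(2k+i-1)}_{i,\partial}$, and $W^{(2k+i)}=W^{(2k+i-1)}$ at grid points not in $\Omega_i$. If the Schwarz alternating method for $\mathcal{L}_hW=0$, $W_\partial=0$ is convergent, then the method above for $(Y,P)$ is convergent. Moreover, if the Schwarz alternating method for $\mathcal{L}_hW=0$, $W_\partial=0$ has convergence rate $\rho_{e,d}\in(0,1)$ under the maximum norm (i.e. $\max\{W^{(2k)}\}\le\rho_{e,d}\max\{W^{(2(k-1))}\}$ for $k\ge1$ and any initial guess), then for $k=1,2,\dots$, $$\max\{E^{(2k)}\}\le\rho_{e,d}\max\{E^{(2(k-1))}\},$$ where $\max$ is taken over all components.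
   Context: The $(Y,P)$ system is the discrete first-order optimality system (control eliminated) of the five-point finite difference discretization of minimizing $\frac12\|y-y_d\|_{L^2}^2+\frac\alpha2\|u\|_{L^2}^2$ subject to $-\Delta y=f+u$ in $(0,1)^2$, $y=0$ on the boundary, with the objective approximated by the trapezoidal rule. *)

From HB Require Import structures.
From mathcomp Require Import all_boot all_order all_algebra.
From mathcomp Require Import all_classical all_reals all_analysis.
Set Implicit Arguments. Unset Strict Implicit. Unset Printing Implicit Defensive.
Import Order.TTheory GRing.Theory Num.Theory.
Import numFieldNormedType.Exports.
Local Open Scope ring_scope.
Local Open Scope classical_set_scope.

Section Defs.
Variable R : realType.
Variable N : nat.

Definition gvec := 'I_N.+1 -> 'I_N.+1 -> R.

(* access by natural-number indices (only used for in-range indices) *)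
Definition gat (Z : gvec) (i j : nat) : R := Z (inord i) (inord j).

Definition hstep : R := (N%:R)^-1.

Definition Lh (Z : gvec) (i j : nat) : R :=
  - hstep ^- 2 * (gat Z i.-1 j + gat Z i.+1 j - 4 * gat Z i j
                  + gat Z i j.-1 + gat Z i j.+1).

Definition interior (i j : nat) : bool :=
  [&& (0 < i)%N, (i < N)%N, (0 < j)%N & (j < N)%N].

(* A subdomain whose boundary lies on grid lines is the interior of a union
   of closed grid cells; cell (a,b), a,b < N, is [a h,(a+1) h] x [b h,(b+1) h]. *)
Definition cellset := nat -> nat -> bool.

Definition valid_cells (C : cellset) : Prop :=
  forall a b, C a b -> (a < N)%N /\ (b < N)%N.

(* grid point (i,j) lies in the open subdomain  interior(U cells of C):
   exactly when all four cells around it belong to C *)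
Definition in_dom (C : cellset) (i j : nat) : bool :=
  [&& (0 < i)%N, (0 < j)%N, C i.-1 j.-1, C i.-1 j, C i j.-1 & C i j].

(* Omega = Omega_1 U Omega_2 is an overlapping decomposition.
   (For N >= 2, Omega_1 U Omega_2 = Omega iff every interior grid point lies
   in Omega_1 or in Omega_2; Omega_1 /\ Omega_2 <> empty iff a common cell.) *)
Definition overlapping_decomposition (C1 C2 : cellset) : Prop :=
  [/\ valid_cells C1, valid_cells C2,
      (forall i j, interior i j -> in_dom C1 i j || in_dom C2 i j)
    & exists a b, C1 a b && C2 a b].

Definition solves_system (alpha : R) (F Yd Y P : gvec) : Prop :=
  forall i j : 'I_N.+1,
    if interior i j then
      Lh Y i j = F i j - alpha^-1 * hstep ^- 2 * P i j /\
      Lh (fun a b => hstep ^- 2 * P a b) i j = Y i j - Yd i j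
    else Y i j = 0 /\ P i j = 0.

Definition bdry_zero (Z : gvec) : Prop :=
  forall i j : 'I_N.+1, ~~ interior i j -> Z i j = 0.

Definition sub_step (alpha : R) (F Yd : gvec) (C : cellset)
    (Y0 P0 Y1 P1 : gvec) : Prop :=
  forall i j : 'I_N.+1,
    if in_dom C i j then
      Lh Y1 i j = F i j - alpha^-1 * hstep ^- 2 * P1 i j /\
      Lh (fun a b => hstep ^- 2 * P1 a b) i j = Y1 i j - Yd i j
    else Y1 i j = Y0 i j /\ P1 i j = P0 i j.

(* iterate n+1 = 2k+i uses Omega_1 if n+1 is odd, Omega_2 if even *)
Definition schwarz_YP (alpha : R) (F Yd : gvec) (C1 C2 : cellset)
    (Yk Pk : nat -> gvec) : Prop :=
  bdry_zero (Yk 0%N) /\ bdry_zero (Pk 0%N) /\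
  forall n, sub_step alpha F Yd (if odd n.+1 then C1 else C2)
                     (Yk n) (Pk n) (Yk n.+1) (Pk n.+1).

Definition sub_step_W (C : cellset) (W0 W1 : gvec) : Prop :=
  forall i j : 'I_N.+1,
    if in_dom C i j then Lh W1 i j = 0 else W1 i j = W0 i j.

Definition schwarz_W (C1 C2 : cellset) (Wk : nat -> gvec) : Prop :=
  bdry_zero (Wk 0%N) /\
  forall n, sub_step_W (if odd n.+1 then C1 else C2) (Wk n) (Wk n.+1).

Definition mxnorm (Z : gvec) : R :=
  \big[Num.max/0]_(i < N.+1) \big[Num.max/0]_(j < N.+1) `|Z i j|.

Definition errE (alpha : R) (Y P Yn Pn : gvec) : gvec :=
  fun i j => (Y i j - Yn i j) ^+ 2
             + alpha^-1 / hstep ^+ 4 * (P i j - Pn i j) ^+ 2.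

Definition W_convergent (C1 C2 : cellset) : Prop :=
  forall Wk : nat -> gvec, schwarz_W C1 C2 Wk ->
    forall i j, (fun n => Wk n i j) @ \oo --> (0 : R).

Definition W_rate (C1 C2 : cellset) (rho : R) : Prop :=
  forall Wk : nat -> gvec, schwarz_W C1 C2 Wk ->
    forall k, (0 < k)%N -> mxnorm (Wk (2 * k)%N) <= rho * mxnorm (Wk (2 * k.-1)%N).

Definition YP_convergent (alpha : R) (F Yd Y P : gvec) (C1 C2 : cellset) : Prop :=
  forall Yk Pk : nat -> gvec, schwarz_YP alpha F Yd C1 C2 Yk Pk ->
    forall i j, (fun n => Yk n i j) @ \oo --> Y i j /\
                (fun n => Pk n i j) @ \oo --> P i j.

End Defs.

(* With e = Y - Y^(n), q = P - P^(n) and c = alpha^-1 h^-4 we have E^(n) = s^2 for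
   s = sqrt (e^2 + c q^2).  On the subdomain being solved, subtracting the equations of
   (Y, P) and (Y^(n), P^(n)) gives  sum_nb e = 4 e + alpha^-1 q  and
   e = h^-4 (4 q - sum_nb q),  whence 4 s <= |(sum_nb e, sum_nb q)|_c <= sum_nb s:
   the error s is discretely subharmonic.  By the discrete maximum principle, s is then
   dominated step by step by the Schwarz iterates W of L_h W = 0 started from
   W^(0) = s^(2k-2), which vanishes on the boundary.  Convergence of W thus gives
   convergence of (Y, P), and max W^(2) <= rho max W^(0) gives
   max E^(2k) <= rho^2 max E^(2k-2) <= rho max E^(2k-2). *)

From Pilot Require Import Defs.
From HB Require Import structures.
From mathcomp Require Import all_boot all_order all_algebra.
From mathcomp Require Import all_classical all_reals all_analysis.
From mathcomp Require Import ring lra.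
Import Order.TTheory GRing.Theory Num.Theory.
Import numFieldNormedType.Exports.
Local Open Scope ring_scope.
Local Open Scope classical_set_scope.

Section WeightedNorm.
Context {R : rcfType}.
Implicit Types a c x y : R.

Definition wnorm c x y : R := Num.sqrt (x ^+ 2 + c * y ^+ 2).

Lemma ler_of_sqr (u v : R) : 0 <= v -> u ^+ 2 <= v ^+ 2 -> u <= v.
Proof.
move=> v_ge0 uv; apply: le_trans (ler_norm u) _.
by rewrite -(ler_pXn2r (isT : (0 < 2)%N)) ?nnegrE // real_normK ?num_real.
Qed.

Lemma wnorm_ge0 c x y : 0 <= wnorm c x y.
Proof. exact: sqrtr_ge0. Qed.

Lemma wnorm_sqr c x y : 0 <= c -> wnorm c x y ^+ 2 = x ^+ 2 + c * y ^+ 2.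
Proof. by move=> c_ge0; rewrite /wnorm sqr_sqrtr // addr_ge0 ?sqr_ge0 // mulr_ge0 ?sqr_ge0. Qed.

Lemma ler_wnormD c x1 y1 x2 y2 : 0 <= c ->
  wnorm c (x1 + x2) (y1 + y2) <= wnorm c x1 y1 + wnorm c x2 y2.
Proof.
move=> c_ge0; apply: ler_of_sqr; first exact: addr_ge0 (wnorm_ge0 _ _ _) (wnorm_ge0 _ _ _).
have n1_ge0 := wnorm_ge0 c x1 y1; have n2_ge0 := wnorm_ge0 c x2 y2.
have cauchy_schwarz : x1 * x2 + c * y1 * y2 <= wnorm c x1 y1 * wnorm c x2 y2.
  apply: ler_of_sqr; first exact: mulr_ge0.
  rewrite exprMn !wnorm_sqr //.
  have : 0 <= c * (x1 * y2 - x2 * y1) ^+ 2 by rewrite mulr_ge0 ?sqr_ge0.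
  lra.
rewrite sqrrD !wnorm_sqr //; lra.
Qed.

Lemma ler_wnormD4 c x1 y1 x2 y2 x3 y3 x4 y4 : 0 <= c ->
  wnorm c (x1 + x2 + x3 + x4) (y1 + y2 + y3 + y4) <=
  wnorm c x1 y1 + wnorm c x2 y2 + wnorm c x3 y3 + wnorm c x4 y4.
Proof.
move=> c_ge0; do 2![apply: le_trans (ler_wnormD _ _ _ _ _ c_ge0) _; rewrite lerD2r].
exact: ler_wnormD.
Qed.

Lemma ler_wnorm_coupled a A e q Se Sq : 0 < a ->
  Se = 4 * e + a * q -> e = A ^+ 2 * (4 * q - Sq) ->
  4 * wnorm (a * A ^+ 2) e q <= wnorm (a * A ^+ 2) Se Sq.
Proof.
move=> a_gt0 -> e_eq; set f := 4 * q - Sq in e_eq.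
have c_ge0 : 0 <= a * A ^+ 2 by rewrite mulr_ge0 ?sqr_ge0 // ltW.
apply: ler_of_sqr; first exact: wnorm_ge0.
have -> : Sq = 4 * q - f by rewrite /f; ring.
rewrite exprMn !wnorm_sqr // e_eq.
(* the difference of the two sides squared is a^2 q^2 + a (A f)^2 *)
have := mulr_ge0 (sqr_ge0 a) (sqr_ge0 q).
have := mulr_ge0 (ltW a_gt0) (sqr_ge0 (A * f)).
lra.
Qed.

Lemma ler_norm_wnorm c x y : 0 <= c -> `|x| <= wnorm c x y.
Proof.
move=> c_ge0; apply: ler_of_sqr; first exact: wnorm_ge0.
rewrite wnorm_sqr // real_normK ?num_real // lerDl.
by rewrite mulr_ge0 ?sqr_ge0.
Qed.

Lemma ler_norm_wnorm_weight c x y : 0 < c -> `|y| <= (Num.sqrt c)^-1 * wnorm c x y.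
Proof.
move=> c_gt0; have c_ge0 := ltW c_gt0.
have sc_gt0 : 0 < Num.sqrt c by rewrite sqrtr_gt0.
rewrite -(ler_pM2l sc_gt0) mulrA mulfV ?gt_eqF // mul1r.
apply: ler_of_sqr; first exact: wnorm_ge0.
rewrite exprMn sqr_sqrtr // real_normK ?num_real // wnorm_sqr //.
by rewrite lerDr sqr_ge0.
Qed.

End WeightedNorm.

Lemma cvg0_dominated {R : realType} {T : Type} {F : set_system T} {FF : Filter F}
    {u w : T -> R} (K : R) :
  (forall t, `|u t| <= K * w t) -> w @ F --> 0 -> u @ F --> 0.
Proof.
move=> u_le w0; have Kw0 : K * w t @[t --> F] --> 0.
  by rewrite -(mulr0 K); exact: cvgMl_tmp.
have mKw0 : - (K * w t) @[t --> F] --> 0 by rewrite -oppr0; exact: cvgN.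
by apply: (squeeze_cvgr _ mKw0 Kw0); apply: filterE => t; rewrite -ler_norml.
Qed.

Lemma linear_mx_surj {K : fieldType} {m n : nat} (f : {linear 'M[K]_(m, n) -> 'M[K]_(m, n)}) :
  (forall A, f A = 0 -> A = 0) -> forall G, exists A, f A = G.
Proof.
move=> f_inj G.
have : row_free (lin_mx f).
  rewrite -kermx_eq0; apply/eqP/row_matrixP => i; rewrite row0.
  have : row i (kermx (lin_mx f)) *m lin_mx f = 0 by apply/sub_kermxP; exact: row_sub.
  rewrite -[row i _]vec_mxK mul_vec_lin => /eqP; rewrite mxvec_eq0 => /eqP /f_inj ->.
  by rewrite linear0.
rewrite row_free_unit => f_unit.
exists (vec_mx (mxvec G *m invmx (lin_mx f))).
by rewrite -mx_vec_lin vec_mxK mulmxKV // mxvecK.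
Qed.

Section Grid.
Variables (R : realType) (N : nat).
Implicit Types (Z d : gvec R N) (C : cellset).

Lemma gat_ord Z (i j : 'I_N.+1) : gat Z i j = Z i j.
Proof. by rewrite /gat !inord_val. Qed.

Lemma mxnorm_ge Z i j : `|Z i j| <= mxnorm Z.
Proof.
apply: le_trans (le_bigmax _ (fun i => \big[Num.max/0]_(j < N.+1) `|Z i j|) i).
exact: (le_bigmax _ (fun j => `|Z i j|) j).
Qed.

Lemma mxnorm_le Z c : 0 <= c -> (forall i j, `|Z i j| <= c) -> mxnorm Z <= c.
Proof. by move=> c_ge0 Zc; do 2!apply: bigmax_le => // ? _. Qed.

Lemma mxnorm_ge0 Z : 0 <= mxnorm Z.
Proof. exact: le_trans (normr_ge0 _) (mxnorm_ge Z ord0 ord0). Qed.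

Lemma ler_mxnorm Z1 Z2 : (forall i j, `|Z1 i j| <= `|Z2 i j|) -> mxnorm Z1 <= mxnorm Z2.
Proof.
move=> Z12; apply: mxnorm_le (mxnorm_ge0 _) _ => i j.
exact: le_trans (Z12 i j) (mxnorm_ge _ i j).
Qed.

Lemma mxnorm_sqr Z : mxnorm (fun i j => Z i j ^+ 2) = mxnorm Z ^+ 2.
Proof.
have normZ2 i j : `|Z i j ^+ 2| = `|Z i j| ^+ 2 by rewrite normrX.
apply/eqP; rewrite eq_le; apply/andP; split.
  apply: mxnorm_le; first exact: sqr_ge0.
  move=> i j; rewrite normZ2 ler_sqr ?nnegrE ?mxnorm_ge0 //; exact: mxnorm_ge.
set M2 := mxnorm (fun i j => Z i j ^+ 2); have M2_ge0 : 0 <= M2 by exact: mxnorm_ge0.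
have : mxnorm Z <= Num.sqrt M2.
  apply: mxnorm_le; first exact: sqrtr_ge0.
  move=> i j; rewrite -sqrtr_sqr ler_wsqrtr // -real_normK ?num_real // -normZ2.
  exact: (mxnorm_ge (fun i j => Z i j ^+ 2)).
by rewrite -(ler_sqr (mxnorm_ge0 _) (sqrtr_ge0 _)) sqr_sqrtr.
Qed.

Definition subharmonic_on C d := forall i j : 'I_N.+1, in_dom C i j ->
  4 * gat d i j <= gat d i.-1 j + gat d i.+1 j + gat d i j.-1 + gat d i j.+1.

Lemma in_dom_interior {C i j} : valid_cells N C -> in_dom C i j -> Defs.interior N i j.
Proof.
move=> C_valid /and5P[i_gt0 j_gt0 _ _ /andP[_ Cij]].
by rewrite /Defs.interior i_gt0 j_gt0; have [-> ->] := C_valid _ _ Cij.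
Qed.

Lemma in_domN C j : valid_cells N C -> ~~ in_dom C N j.
Proof. by move=> C_valid; apply/negP => /(in_dom_interior C_valid) /and4P[_]; rewrite ltnn. Qed.

Lemma subharmonic_max_right C d M (i j : 'I_N.+1) : subharmonic_on C d ->
  (forall a b, gat d a b <= M) -> in_dom C i j -> gat d i j = M -> gat d i.+1 j = M.
Proof.
move=> d_sub d_le ij_dom dij; have := d_sub i j ij_dom; rewrite dij => sub.
have := d_le i.-1 j; have := d_le i j.-1; have := d_le i j.+1; have := d_le i.+1 j.
move=> right_le *; apply/eqP; rewrite eq_le right_le /=; lra.
Qed.

Lemma discrete_max_principle C d : valid_cells N C -> subharmonic_on C d ->
  (forall i j : 'I_N.+1, ~~ in_dom C i j -> d i j <= 0) -> forall i j, d i j <= 0.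
Proof.
move=> C_valid d_sub d_out.
have [[p1 p2] _ /= d_le] := @arg_maxP _ R _ (ord0, ord0) xpredT
  (fun p : 'I_N.+1 * 'I_N.+1 => d p.1 p.2) isT.
set M := d p1 p2 in d_le; have gat_le a b : gat d a b <= M by exact: d_le (inord a, inord b) isT.
move=> i j; apply: le_trans (d_le (i, j) isT) _; rewrite leNgt; apply/negP => M_gt0.
(* a positive maximum spreads rightwards along row p2 up to column N,
   which lies outside every subdomain *)
have dom_of_max a : (a <= N)%N -> gat d a p2 = M -> in_dom C a p2.
  move=> a_le da; apply/negPn/negP => a_out.
  have := d_out (inord a) p2; rewrite inordK ?ltnS // => /(_ a_out).
  by move: da; rewrite /gat inord_val; lra.
have walk t : (p1 + t <= N)%N -> gat d (p1 + t) p2 = M.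
  elim: t => [|t IH] le_N; first by rewrite addn0 gat_ord.
  have le_tN : (p1 + t <= N)%N by apply: leq_trans le_N; rewrite leq_add2l.
  have := @subharmonic_max_right C d M (inord (p1 + t)) p2 d_sub gat_le.
  rewrite inordK ?ltnS // addnS => step; apply: step (IH le_tN).
  exact: dom_of_max le_tN (IH le_tN).
have p1_le : (p1 <= N)%N := ltn_ord p1.
have := walk (N - p1)%N; rewrite subnKC // => /(_ (leqnn N)) dN.
by have := in_domN C p2 C_valid; rewrite (dom_of_max _ (leqnn N) dN).
Qed.

Lemma valid_cells_alternate {C1 C2} n : valid_cells N C1 -> valid_cells N C2 ->
  valid_cells N (if odd n.+1 then C1 else C2).
Proof. by case: ifP. Qed.

Lemma schwarz_YP_bdry {alpha F Yd C1 C2} {Yk Pk : nat -> gvec R N} :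
  valid_cells N C1 -> valid_cells N C2 -> schwarz_YP alpha F Yd C1 C2 Yk Pk ->
  forall n (i j : 'I_N.+1), ~~ Defs.interior N i j -> Yk n i j = 0 /\ Pk n i j = 0.
Proof.
move=> C1_valid C2_valid [Y0_bd [P0_bd step]].
elim=> [|n IH] i j ij_bd; first by rewrite Y0_bd ?P0_bd.
move: (valid_cells_alternate n C1_valid C2_valid) (step n i j).
move: (if odd n.+1 then C1 else C2) => C C_valid.
case: ifP => [ij_dom _ | _ [-> ->]]; last exact: IH.
by have := in_dom_interior C_valid ij_dom; rewrite (negbTE ij_bd).
Qed.

Hypothesis N_gt0 : (0 < N)%N.

Lemma hstep_neq0 : hstep R N != 0.
Proof. by rewrite /hstep invr_eq0 pnatr_eq0 -lt0n. Qed.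

Lemma Lh_eq0 {Z i j} : Lh Z i j = 0 ->
  gat Z i.-1 j + gat Z i.+1 j + gat Z i j.-1 + gat Z i j.+1 = 4 * gat Z i j.
Proof.
rewrite /Lh => /eqP; rewrite mulf_eq0 oppr_eq0 invr_eq0 expf_eq0.
by rewrite (negbTE hstep_neq0) andbF /= => /eqP; lra.
Qed.

Lemma Lh_dirichlet_eq0 C Z : valid_cells N C ->
  (forall i j : 'I_N.+1, in_dom C i j -> Lh Z i j = 0) ->
  (forall i j : 'I_N.+1, ~~ in_dom C i j -> Z i j = 0) -> forall i j, Z i j = 0.
Proof.
move=> C_valid Z_dom Z_out.
have scaled_le0 (s : R) i j : s * Z i j <= 0.
  apply: (discrete_max_principle C (fun a b => s * Z a b) C_valid) => {i j} i j ij_dom.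
    have gatZ x y : gat (fun a b => s * Z a b) x y = s * gat Z x y by [].
    by rewrite !gatZ -!mulrDr (Lh_eq0 (Z_dom i j ij_dom)) mulrCA.
  by rewrite Z_out ?mulr0.
by move=> i j; have := scaled_le0 1 i j; have := scaled_le0 (-1) i j; lra.
Qed.

(* A subdomain solve is a square linear system, uniquely solvable by the maximum
   principle; the hypotheses on the W-method are only usable once such iterates exist. *)
Section SubdomainSolve.
Variable C : cellset.
Hypothesis C_valid : valid_cells N C.

Definition subdomain_op (A : 'M[R]_N.+1) : 'M[R]_N.+1 :=
  \matrix_(i, j) if in_dom C i j then Lh (fun a b => A a b) i j else A i j.

Lemma subdomain_op_is_linear : linear subdomain_op.
Proof.
move=> k A B; apply/matrixP => i j; rewrite !mxE.
by case: ifP => // _; rewrite /Lh /gat !mxE; ring.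
Qed.

HB.instance Definition _ :=
  GRing.isLinear.Build R _ _ _ subdomain_op subdomain_op_is_linear.

Lemma sub_step_W_exists (W0 : gvec R N) : exists W1, sub_step_W C W0 W1.
Proof.
have op_inj A : subdomain_op A = 0 -> A = 0.
  move=> A0; have opA i j := congr1 (fun M : 'M[R]_N.+1 => M i j) A0.
  apply/matrixP => i j; rewrite mxE.
  apply: (Lh_dirichlet_eq0 C (fun a b => A a b) C_valid) => {i j} i j ij_dom.
    by have := opA i j; rewrite !mxE ij_dom.
  by have := opA i j; rewrite !mxE (negbTE ij_dom).
have [A opA] := linear_mx_surj _ op_inj
  (\matrix_(i, j) if in_dom C i j then 0 else W0 i j).
exists (fun i j => A i j) => i j.
by have := congr1 (fun M : 'M[R]_N.+1 => M i j) opA; rewrite !mxE; case: ifP.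
Qed.

End SubdomainSolve.

Lemma schwarz_W_exists {C1 C2} (W0 : gvec R N) : valid_cells N C1 -> valid_cells N C2 ->
  bdry_zero W0 -> exists Wk, Wk 0%N = W0 /\ schwarz_W C1 C2 Wk.
Proof.
move=> C1_valid C2_valid W0_bd.
have [sol solP] := choice (fun p : nat * gvec R N =>
  sub_step_W_exists _ (valid_cells_alternate p.1 C1_valid C2_valid) p.2).
pose fix Wk n := if n is m.+1 then sol (m, Wk m) else W0.
by exists Wk; split=> //; split=> // n; exact: solP (n, Wk n).
Qed.

Section ErrorBound.
Variables (alpha : R) (F Yd Y P : gvec R N).
Hypotheses (alpha_gt0 : 0 < alpha) (YP_sol : solves_system alpha F Yd Y P).

Definition err_weight : R := alpha^-1 / hstep R N ^+ 4.

Lemma err_weightE : err_weight = alpha^-1 * (hstep R N ^- 2) ^+ 2.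
Proof. by rewrite /err_weight exprVn -exprM. Qed.

Lemma err_weight_gt0 : 0 < err_weight.
Proof. by rewrite divr_gt0 ?invr_gt0 // exprn_gt0 // invr_gt0 ltr0n. Qed.

Definition err_mag (Yn Pn : gvec R N) : gvec R N :=
  fun i j => wnorm err_weight (Y i j - Yn i j) (P i j - Pn i j).

Lemma errE_err_mag Yn Pn : errE alpha Y P Yn Pn = fun i j => err_mag Yn Pn i j ^+ 2.
Proof. by apply/funext => i; apply/funext => j; rewrite wnorm_sqr // ltW ?err_weight_gt0. Qed.

Lemma err_mag_subharmonic {C Y0 P0 Y1 P1} : valid_cells N C ->
  sub_step alpha F Yd C Y0 P0 Y1 P1 -> subharmonic_on C (err_mag Y1 P1).
Proof.
move=> C_valid step i j ij_dom.
have := YP_sol i j; rewrite (in_dom_interior C_valid ij_dom) => -[LY LP].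
have := step i j; rewrite ij_dom => -[LY1 LP1].
pose e a b := gat Y a b - gat Y1 a b; pose q a b := gat P a b - gat P1 a b.
have magE a b : gat (err_mag Y1 P1) a b = wnorm err_weight (e a b) (q a b) by [].
have gatZ (k : R) (Z : gvec R N) a b : gat (fun x y => k * Z x y) a b = k * gat Z a b.
  by [].
rewrite !magE; move: LY LP LY1 LP1.
rewrite /Lh !gatZ -(gat_ord Y) -(gat_ord Y1) -(gat_ord P) -(gat_ord P1).
set A := hstep R N ^- 2 => LY LP LY1 LP1.
have A_neq0 : A != 0 by rewrite invr_eq0 expf_eq0 (negbTE hstep_neq0) andbF.
have sum_e : e i.-1 j + e i.+1 j + e i j.-1 + e i j.+1 = 4 * e i j + alpha^-1 * q i j.
  apply/eqP; rewrite -subr_eq0; apply/eqP; apply: (mulfI A_neq0).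
  by rewrite mulr0 /e /q; lra.
have sum_q : e i j = A ^+ 2 * (4 * q i j - (q i.-1 j + q i.+1 j + q i j.-1 + q i j.+1)).
  by rewrite /e /q; nra.
have ai_gt0 : 0 < alpha^-1 by rewrite invr_gt0.
have := ler_wnorm_coupled _ _ _ _ _ _ ai_gt0 sum_e sum_q.
rewrite -/A -err_weightE => coupled; apply: le_trans coupled _.
exact: ler_wnormD4 (ltW err_weight_gt0).
Qed.

Lemma err_mag_le_sub_step C Y0 P0 Y1 P1 (W0 W1 : gvec R N) : valid_cells N C ->
  sub_step alpha F Yd C Y0 P0 Y1 P1 -> sub_step_W C W0 W1 ->
  (forall i j, err_mag Y0 P0 i j <= W0 i j) -> forall i j, err_mag Y1 P1 i j <= W1 i j.
Proof.
move=> C_valid step stepW le0 i j; rewrite -subr_le0.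
apply: (discrete_max_principle C (fun a b => err_mag Y1 P1 a b - W1 a b) C_valid).
- move=> {i j} i j ij_dom; have gatB Z1 Z2 a b :
    gat (fun x y => Z1 x y - Z2 x y) a b = gat Z1 a b - gat Z2 a b by [].
  have := err_mag_subharmonic C_valid step _ _ ij_dom.
  by have := stepW i j; rewrite ij_dom gatB => /Lh_eq0; rewrite !gatB; lra.
- move=> {i j} i j ij_out; have := step i j; have := stepW i j.
  rewrite (negbTE ij_out) /= /err_mag => -> [-> ->]; rewrite subr_le0; exact: le0.
Qed.

Lemma err_mag_bdry_zero {C1 C2 Yk Pk} n : valid_cells N C1 -> valid_cells N C2 ->
  schwarz_YP alpha F Yd C1 C2 Yk Pk -> bdry_zero (err_mag (Yk n) (Pk n)).
Proof.
move=> C1_valid C2_valid YPk i j ij_bd; rewrite /err_mag.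
have [-> ->] := schwarz_YP_bdry C1_valid C2_valid YPk n i j ij_bd.
have := YP_sol i j; rewrite (negbTE ij_bd) => -[-> ->].
by rewrite /wnorm subrr expr2 !mul0r mulr0 addr0 sqrtr0.
Qed.

Lemma err_mag_dominated {C1 C2 Yk Pk} m : valid_cells N C1 -> valid_cells N C2 ->
  schwarz_YP alpha F Yd C1 C2 Yk Pk -> ~~ odd m ->
  exists Wk, [/\ schwarz_W C1 C2 Wk, Wk 0%N = err_mag (Yk m) (Pk m) &
    forall n i j, err_mag (Yk (m + n)%N) (Pk (m + n)%N) i j <= Wk n i j].
Proof.
move=> C1_valid C2_valid YPk m_even.
have [Wk [W0 Wk_sch]] :=
  schwarz_W_exists _ C1_valid C2_valid (err_mag_bdry_zero m C1_valid C2_valid YPk).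
exists Wk; split=> //; elim=> [|n IH] i j; first by rewrite addn0 W0.
rewrite addnS; apply: err_mag_le_sub_step (Wk_sch.2 n) IH i j.
  exact: valid_cells_alternate.
(* m is even, so step m + n of the (Y, P)-method uses the subdomain of step n *)
by have [_ [_ step]] := YPk; have := step (m + n)%N; rewrite -addnS oddD (negbTE m_even).
Qed.

Lemma YP_convergent_of_W_convergent C1 C2 : valid_cells N C1 -> valid_cells N C2 ->
  W_convergent R N C1 C2 -> YP_convergent alpha F Yd Y P C1 C2.
Proof.
move=> C1_valid C2_valid W_cvg Yk Pk YPk i j.
have [Wk [Wk_sch _ dom]] := err_mag_dominated 0 C1_valid C2_valid YPk isT.
have Wk_cvg := W_cvg _ Wk_sch i j; have w_gt0 := err_weight_gt0.
split; apply/subr_cvg0.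
  apply: (cvg0_dominated 1 _ Wk_cvg) => n; rewrite mul1r distrC.
  exact: le_trans (ler_norm_wnorm _ _ _ (ltW w_gt0)) (dom n i j).
apply: (cvg0_dominated (Num.sqrt err_weight)^-1 _ Wk_cvg) => n.
rewrite distrC; apply: le_trans (ler_norm_wnorm_weight _ _ _ w_gt0) _.
by rewrite ler_pM2l ?invr_gt0 ?sqrtr_gt0 //; exact: dom n i j.
Qed.

Lemma errE_rate_of_W_rate C1 C2 rho : valid_cells N C1 -> valid_cells N C2 ->
  0 <= rho <= 1 -> W_rate N C1 C2 rho ->
  forall Yk Pk, schwarz_YP alpha F Yd C1 C2 Yk Pk -> forall k, (0 < k)%N ->
  mxnorm (errE alpha Y P (Yk (2 * k)%N) (Pk (2 * k)%N))
  <= rho * mxnorm (errE alpha Y P (Yk (2 * k.-1)%N) (Pk (2 * k.-1)%N)).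
Proof.
move=> C1_valid C2_valid /andP[rho_ge0 rho_le1] W_rt Yk Pk YPk [//|k] _.
rewrite mulnS addnC /= !errE_err_mag !mxnorm_sqr.
have k2_even : ~~ odd (2 * k) by rewrite oddM.
have [Wk [Wk_sch W0 dom]] := err_mag_dominated _ C1_valid C2_valid YPk k2_even.
set s0 := mxnorm (err_mag _ (Pk (2 * k)%N)); set s2 := mxnorm (err_mag _ _).
have contract : s2 <= rho * s0.
  rewrite /s0 -W0; apply: le_trans (W_rt _ Wk_sch 1%N isT).
  apply: ler_mxnorm => i j; rewrite ger0_norm ?wnorm_ge0 //.
  exact: le_trans (dom 2%N i j) (ler_norm _).
have s0_ge0 : 0 <= s0 by exact: mxnorm_ge0.
have s2_ge0 : 0 <= s2 by exact: mxnorm_ge0.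
apply: le_trans (_ : _ <= (rho * s0) ^+ 2) _.
  by rewrite ler_sqr ?nnegrE ?mulr_ge0.
rewrite exprMn; apply: ler_wpM2r; first exact: sqr_ge0.
by rewrite expr2 ler_piMr.
Qed.

End ErrorBound.

End Grid.

Theorem theorem4p2 (R : realType) (N : nat) (hN : (2 <= N)%N)
    (C1 C2 : cellset) (hdec : overlapping_decomposition N C1 C2)
    (alpha : R) (halpha : 0 < alpha) (F Yd Y P : gvec R N)
    (hsol : solves_system alpha F Yd Y P) :
  (W_convergent R N C1 C2 -> YP_convergent alpha F Yd Y P C1 C2) /\
  (forall rho : R, 0 < rho < 1 -> W_rate N C1 C2 rho ->
     forall Yk Pk : nat -> gvec R N, schwarz_YP alpha F Yd C1 C2 Yk Pk ->
     forall k : nat, (0 < k)%N ->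
       mxnorm (errE alpha Y P (Yk (2 * k)%N) (Pk (2 * k)%N))
       <= rho * mxnorm (errE alpha Y P (Yk (2 * k.-1)%N) (Pk (2 * k.-1)%N))).
Proof.
have N_gt0 : (0 < N)%N by exact: leq_trans hN.
have [C1_valid C2_valid _ _] := hdec.
split; first exact: YP_convergent_of_W_convergent.
move=> rho /andP[rho_gt0 rho_lt1].
by apply: errE_rate_of_W_rate; rewrite // !ltW.
Qed.
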